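(* Let $G=(V,E)$ be an undirected graph (loops excluded, parallel edges allowed). An orientation of $G$ is decreasingly minimal if and only if it is increasingly maximal.
   Context: For an orientation $D$ of $G$, its in-degree vector is $m(v)=\varrho_D(v)$, the number of arcs of $D$ with head $v$. An orientation is decreasingly minimal (dec-min) if its in-degree vector is decreasingly minimal among in-degree vectors of all orientations of $G$: its largest component is as small as possible, within this its second largest is as small as possible, and so on. It is increasingly maximal (inc-max) if its in-degree vector has smallest component as large as possible, within this its second smallest component as large as possible, and so on. *)

From mathcomp Require Import all_boot.
Set Implicit Arguments. Unset Strict Implicit. Unset Printing Implicit Defensive.

(* A finite undirected multigraph G = (V, E): each edge e : E has two
   end-nodes [ends e]; loops are excluded by a hypothesis in the theorem. *)

Definition orientation (E : finType) := {ffun E -> bool}.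

Definition head_of (V E : finType) (ends : E -> V * V) (D : orientation E)
  (e : E) : V := if D e then (ends e).2 else (ends e).1.

Definition indeg (V E : finType) (ends : E -> V * V) (D : orientation E)
  (v : V) : nat := #|[set e : E | head_of ends D e == v]|.

Fixpoint lex_le (s t : seq nat) : bool :=
  match s, t with
  | [::], _ => true
  | _ :: _, [::] => false
  | x :: s', y :: t' => (x < y) || ((x == y) && lex_le s' t')
  end.

Definition dec_vec (V E : finType) (ends : E -> V * V) (D : orientation E) :=
  sort geq [seq indeg ends D v | v <- enum V].
Definition inc_vec (V E : finType) (ends : E -> V * V) (D : orientation E) :=
  sort leq [seq indeg ends D v | v <- enum V].

Definition dec_min (V E : finType) (ends : E -> V * V) (D : orientation E) :=
  forall D' : orientation E, lex_le (dec_vec ends D) (dec_vec ends D').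

Definition inc_max (V E : finType) (ends : E -> V * V) (D : orientation E) :=
  forall D' : orientation E, lex_le (inc_vec ends D') (inc_vec ends D).

(* An orientation is balanced if no directed path leads from s to t with
   indeg t >= indeg s + 2.  Reversing such a path moves one unit of in-degree
   from t to s, which strictly improves both the decreasingly and the
   increasingly sorted in-degree vector; hence dec-min and inc-max orientations
   are balanced.  Conversely, let D be balanced and D0 dec-min (or inc-max).
   If their in-degrees differ, some t has indeg_D0 t < indeg_D t, and counting
   heads shows that the edges on which D0 and D disagree lead, in D0, from t to
   some s with indeg_D s < indeg_D0 s.  Balance of D and D0 forces
   indeg_D0 s = indeg_D0 t + 1, so reversing that path in D0 only swaps two
   in-degrees, keeps D0 dec-min (inc-max), and brings it closer to D.  Thus
   dec-min and inc-max both mean balanced. *)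

From mathcomp Require Import all_boot zify.
Set Implicit Arguments. Unset Strict Implicit. Unset Printing Implicit Defensive.

Lemma lex_le_trans s t u : lex_le s t -> lex_le t u -> lex_le s u.
Proof.
elim: s t u => [|x s IHs] [|y t] [|z u] //=.
case/orP=> [xy|/andP[/eqP-> st]]; case/orP=> [yz|/andP[/eqP<- tu]].
- by rewrite (ltn_trans xy yz).
- by rewrite xy.
- by rewrite yz.
- by rewrite eqxx (IHs _ _ st tu) orbT.
Qed.

Lemma lex_le_total s t : lex_le s t || lex_le t s.
Proof.
elim: s t => [|x s IHs] [|y t] //=.
by case: (ltngtP x y) => //= ->; rewrite eqxx /= IHs.
Qed.

Lemma sorted_geq_count_lex (u w : seq nat) j :
  sorted geq u -> sorted geq w ->
  (forall i, j < i -> count (leq i) u = count (leq i) w) ->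
  count (leq j) w < count (leq j) u -> ~~ lex_le u w.
Proof.
elim: u w j => [|x u IHu] [|y w] j //= /[dup] su /(order_path_min (rev_trans leq_trans)) u_le.
move=> /[dup] sw /(order_path_min (rev_trans leq_trans)) w_le same lt_j.
case: (ltngtP x y) => //= [xy|eq_xy]; last first.
  subst y.
  apply: (IHu _ j (path_sorted su) (path_sorted sw)); last by rewrite ltn_add2l in lt_j.
  by move=> i /same /eqP; rewrite eqn_add2l => /eqP.
have above_x i : x < i -> count (leq i) u = 0.
  move=> xi; apply/eqP; rewrite -leqn0 leqNgt -has_count; apply/hasPn => z /(allP u_le) zx.
  by rewrite -ltnNge (leq_ltn_trans zx).
case: (ltnP j y) => [jy|yj].
- by move: (same y jy); rewrite leqnn above_x // leqNgt xy.
- have xj : x < j := leq_trans xy yj.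
  by move: lt_j; rewrite above_x // (leqNgt j x) xj.
Qed.

Lemma sorted_leq_count_lex (u w : seq nat) j :
  size u = size w -> sorted leq u -> sorted leq w ->
  (forall i, i < j -> count (geq i) u = count (geq i) w) ->
  count (geq j) u < count (geq j) w -> ~~ lex_le u w.
Proof.
elim: u w j => [|x u IHu] [|y w] j //= [size_uw] /[dup] su /(order_path_min leq_trans) u_ge.
move=> /[dup] sw /(order_path_min leq_trans) w_ge same lt_j.
case: (ltngtP x y) => //= [xy|eq_xy]; last first.
  subst y.
  apply: (IHu _ j size_uw (path_sorted su) (path_sorted sw)); last by rewrite ltn_add2l in lt_j.
  by move=> i /same /eqP; rewrite eqn_add2l => /eqP.
have below_y i : i < y -> count (geq i) w = 0.
  move=> iy; apply/eqP; rewrite -leqn0 leqNgt -has_count; apply/hasPn => z /(allP w_ge) yz.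
  by rewrite -ltnNge (leq_trans iy yz).
case: (ltnP x j) => [xj|jx].
- by move: (same x xj); rewrite leqnn below_y // leqNgt xy.
- have jy : j < y := leq_ltn_trans jx xy.
  by move: lt_j; rewrite below_y // (leqNgt y j) jy.
Qed.

Lemma exists_rel_min (T : finType) (r : rel T) :
  T -> total r -> transitive r -> exists m, forall y, r m y.
Proof.
move=> x0 r_total r_trans.
have sorted_T := sort_sorted r_total (enum T).
have mem_T y : y \in sort r (enum T) by rewrite mem_sort mem_enum.
move: sorted_T mem_T; case: (sort r (enum T)) => [|m s] sorted_T mem_T.
  by have := mem_T x0.
exists m => y; move: (mem_T y); rewrite inE => /predU1P[->|ys].
  by have := r_total m m; rewrite orbb.
exact: (allP (order_path_min r_trans sorted_T)).
Qed.

Lemma count_map_enum (V : finType) (a : pred nat) (f : V -> nat) :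
  count a [seq f v | v <- enum V] = \sum_v a (f v).
Proof. by rewrite -sumn_count sumnE !big_map unlock. Qed.

Lemma exists_lt_of_sum_le (I : finType) (R : {pred I}) (f g : I -> nat) x :
  \sum_(i in R) f i <= \sum_(i in R) g i -> x \in R -> g x < f x ->
  exists2 y, y \in R & f y < g y.
Proof.
move=> le_fg xR gx_lt; apply/exists_inP; apply: contraLR le_fg => /exists_inPn ge_fg.
rewrite -ltnNge (bigD1 x) //= [X in _ < X](bigD1 x) //= -addSn leq_add //.
by apply: leq_sum => i /andP[iR _]; rewrite leqNgt ge_fg.
Qed.

Section UnitMove.
Variables (V : finType) (f g : V -> nat) (s t : V).
Hypothesis neq_st : s != t.
Hypothesis unit_move : forall v, g v + (v == t) = f v + (v == s).

Lemma move_src : g s = (f s).+1.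
Proof. by have := unit_move s; rewrite eqxx (negbTE neq_st); lia. Qed.

Lemma move_dst : f t = (g t).+1.
Proof. by have := unit_move t; rewrite eqxx eq_sym (negbTE neq_st); lia. Qed.

Lemma move_other v : v != s -> v != t -> g v = f v.
Proof. by move=> /negbTE vs /negbTE vt; have := unit_move v; rewrite vs vt !addn0. Qed.

Lemma count_move (a : pred nat) :
  count a [seq g v | v <- enum V] + a (f s) + a (f t) =
  count a [seq f v | v <- enum V] + a (g s) + a (g t).
Proof.
have split_st h : \sum_v a (h v) =
    a (h s) + a (h t) + \sum_(v | (v != s) && (v != t)) a (h v).
  by rewrite (bigD1 s) // (bigD1 t) 1?eq_sym //= addnA.
rewrite !count_map_enum !split_st.
under eq_bigr => v /andP[vs vt] do rewrite move_other //.
lia.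
Qed.

Lemma perm_move_swap : f t = (f s).+1 ->
  perm_eq [seq f v | v <- enum V] [seq g v | v <- enum V].
Proof.
move=> ft; have gt : g t = f s by apply: succn_inj; rewrite -move_dst.
by apply/permP => a; have := count_move a; rewrite move_src -ft gt [RHS]addnAC => /addIn/addIn.
Qed.

Hypothesis steep : (f s).+2 <= f t.

Lemma sort_geq_move_lt :
  ~~ lex_le (sort geq [seq f v | v <- enum V]) (sort geq [seq g v | v <- enum V]).
Proof.
have gt : g t = (f t).-1 by rewrite move_dst.
apply: (sorted_geq_count_lex (j := f t)).
- exact: sort_sorted (fun x y => leq_total y x) _.
- exact: sort_sorted (fun x y => leq_total y x) _.
- move=> i lt_ti; rewrite !count_sort.
  by have := count_move (leq i); rewrite /= move_src gt; lia.
- rewrite !count_sort.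
  by have := count_move (leq (f t)); rewrite /= move_src gt; lia.
Qed.

Lemma sort_leq_move_gt :
  ~~ lex_le (sort leq [seq g v | v <- enum V]) (sort leq [seq f v | v <- enum V]).
Proof.
have gt : g t = (f t).-1 by rewrite move_dst.
apply: (sorted_leq_count_lex (j := f s)).
- by rewrite !size_sort !size_map.
- exact: sort_sorted leq_total _.
- exact: sort_sorted leq_total _.
- move=> i lt_is; rewrite !count_sort.
  by have := count_move (geq i); rewrite /= move_src gt; lia.
- rewrite !count_sort.
  by have := count_move (geq (f s)); rewrite /= move_src gt; lia.
Qed.

End UnitMove.

Section Orientations.
Variables (V E : finType) (ends : E -> V * V).
Implicit Types (D : orientation E) (F : {set E}).

Local Notation head_of := (head_of ends).
Local Notation indeg := (indeg ends).

Definition tail_of D e : V := if D e then (ends e).1 else (ends e).2.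

Definition arc D F : rel V :=
  fun u v => [exists e in F, (tail_of D e == u) && (head_of D e == v)].

Definition flip D e0 : orientation E := [ffun e => if e == e0 then ~~ D e else D e].

Definition indegs D := [seq indeg D v | v <- enum V].

Definition balanced D :=
  forall s t, connect (arc D setT) s t -> indeg D t <= (indeg D s).+1.

Lemma arc_subset D F F' : F \subset F' -> subrel (arc D F) (arc D F').
Proof.
move=> /subsetP sFF' u v /exists_inP[e eF uv].
by apply/exists_inP; exists e; first exact: sFF'.
Qed.

Lemma indegE D v : indeg D v = \sum_e (head_of D e == v).
Proof. by rewrite /indeg -sum1dep_card big_mkcond. Qed.

Lemma head_flip D e0 e :
  head_of (flip D e0) e = if e == e0 then tail_of D e else head_of D e.
Proof. by rewrite /head_of /tail_of ffunE; case: (e == e0); case: (D e). Qed.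

Lemma diff_tail_head D D' e : D e != D' e -> tail_of D e = head_of D' e.
Proof. by rewrite /tail_of /head_of; case: (D e); case: (D' e). Qed.

Lemma diff_head_tail D D' e : D e != D' e -> head_of D e = tail_of D' e.
Proof. by rewrite /tail_of /head_of; case: (D e); case: (D' e). Qed.

Lemma indeg_flip D e v :
  indeg (flip D e) v + (v == head_of D e) = indeg D v + (v == tail_of D e).
Proof.
rewrite !indegE (bigD1 e) //= [in RHS](bigD1 e) //= head_flip eqxx.
under eq_bigr => e' /negbTE e'e do rewrite head_flip e'e.
by rewrite !(eq_sym v); lia.
Qed.

Lemma reverse_path D F s p : uniq (s :: p) -> path (arc D F) s p ->
  exists D', (forall e, D' e != D e -> (e \in F) && (tail_of D e \in s :: p)) /\
             (forall v, indeg D' v + (v == last s p) = indeg D v + (v == s)).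
Proof.
elim: p s => [|x p IHp] s /=.
  by move=> _ _; exists D; split=> [e|v]; rewrite ?eqxx.
case/andP=> s_notin uniq_p /andP[/exists_inP[e eF /andP[/eqP tail_e /eqP head_e]] path_p].
have [D' [changed moved]] := IHp x uniq_p path_p.
have D'e : D' e = D e.
  by apply/eqP; apply: contraNT s_notin => /changed/andP[_]; rewrite tail_e.
exists (flip D' e); split=> [e'|v].
  rewrite ffunE; case: (eqVneq e' e) => [-> _|_ /changed/andP[-> p_e']].
    by rewrite eF tail_e mem_head.
  by rewrite in_cons p_e' orbT.
have [head_D'e tail_D'e] : head_of D' e = x /\ tail_of D' e = s.
  by rewrite -head_e -tail_e /head_of /tail_of D'e.
have := indeg_flip D' e v; rewrite head_D'e tail_D'e.
(* [set] identifies two elaborations of [last x p] that [lia] would see as distinct atoms. *)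
by have := moved v; set l := last x p; lia.
Qed.

Lemma reverse_connect D F s t : connect (arc D F) s t ->
  exists D', (forall e, D' e != D e -> e \in F) /\
             (forall v, indeg D' v + (v == t) = indeg D v + (v == s)).
Proof.
move=> /connectP[p path_p ->]; case/shortenP: path_p => p' path_p' uniq_p' _.
have [D' [changed moved]] := reverse_path uniq_p' path_p'.
by exists D'; split=> // e /changed/andP[].
Qed.

Lemma sum_indeg_in D (R : {pred V}) :
  \sum_(u in R) indeg D u = #|[set e | head_of D e \in R]|.
Proof.
rewrite -sum1dep_card (partition_big (head_of D) (mem R)) //=.
apply: eq_bigr => u uR; rewrite /indeg -sum1dep_card.
by apply: eq_bigl => e; rewrite andb_idl // => /eqP->.
Qed.

Lemma sum_indeg D : \sum_u indeg D u = #|E|.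
Proof.
rewrite (eq_bigl (mem predT)) // sum_indeg_in.
by apply: eq_card => e; rewrite !inE.
Qed.

Lemma exists_indeg_lt D1 D2 :
  (exists v, indeg D1 v != indeg D2 v) -> exists t, indeg D2 t < indeg D1 t.
Proof.
case=> v; case: (ltngtP (indeg D1 v) (indeg D2 v)) => // [lt_v|lt_v] _; last by exists v.
have le_sum : \sum_(u in predT) indeg D2 u <= \sum_(u in predT) indeg D1 u.
  by rewrite !sum_indeg.
by have [t _ lt_t] := exists_lt_of_sum_le le_sum (isT : v \in predT) lt_v; exists t.
Qed.

Lemma reach_indeg_excess D1 D2 t : indeg D2 t < indeg D1 t ->
  exists2 s, connect (arc D2 [set e | D2 e != D1 e]) t s & indeg D1 s < indeg D2 s.
Proof.
set reach := connect (arc D2 [set e | D2 e != D1 e]) t => lt_t.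
have le_sum : \sum_(u in reach) indeg D1 u <= \sum_(u in reach) indeg D2 u.
  rewrite !sum_indeg_in; apply/subset_leq_card/subsetP => e; rewrite !inE.
  case: (eqVneq (D2 e) (D1 e)) => [same|diff]; first by rewrite /head_of same.
  move=> reach_e; apply: connect_trans reach_e (connect1 _).
  by apply/exists_inP; exists e; rewrite ?inE ?diff // (diff_tail_head diff) !eqxx.
exact: exists_lt_of_sum_le le_sum (connect0 _ _) lt_t.
Qed.

Lemma arc_diff_rev D1 D2 u v :
  arc D2 [set e | D2 e != D1 e] u v -> arc D1 setT v u.
Proof.
case/exists_inP=> e; rewrite inE => diff /andP[tail_e head_e].
apply/exists_inP; exists e; rewrite ?inE //.
by rewrite -(diff_head_tail diff) -(diff_tail_head diff) head_e tail_e.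
Qed.

Lemma exchange_step D1 D2 : balanced D1 -> balanced D2 ->
  (exists v, indeg D1 v != indeg D2 v) ->
  exists D3, perm_eq (indegs D2) (indegs D3) /\
             #|[set e | D3 e != D1 e]| < #|[set e | D2 e != D1 e]|.
Proof.
move=> bal1 bal2 /exists_indeg_lt[t lt_t].
have [s reach_ts lt_s] := reach_indeg_excess lt_t.
have neq_ts : t != s by apply: contraTneq lt_t => ->; rewrite -leqNgt ltnW.
have path_D1 : connect (arc D1 setT) s t.
  have := connect_rev (arc D2 [set e | D2 e != D1 e]) s t; rewrite /= reach_ts.
  by apply: connect_sub => u v /arc_diff_rev/connect1.
have path_D2 : connect (arc D2 setT) t s.
  by apply: connect_sub reach_ts => u v /(arc_subset (subsetT _))/connect1.
(* indeg D2 t < indeg D1 t <= (indeg D1 s).+1 <= indeg D2 s <= (indeg D2 t).+1 *)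
have swap : indeg D2 s = (indeg D2 t).+1.
  by have := bal1 _ _ path_D1; have := bal2 _ _ path_D2; lia.
have [D3 [changed moved]] := reverse_connect reach_ts.
exists D3; split; first exact: perm_move_swap neq_ts moved swap.
have [e De] : exists e, D3 e != D2 e.
  apply/existsP; apply: contraT => /existsPn same.
  have D32 : D3 = D2 by apply/ffunP => e; apply/eqP; rewrite -[_ == _]negbK same.
  by have := move_src neq_ts moved; rewrite D32; lia.
apply/proper_card/properP; split.
  apply/subsetP => e'; rewrite !inE.
  by case: (eqVneq (D3 e') (D2 e')) => [-> //|/changed]; rewrite inE.
exists e; first exact: changed e De.
by move: De (changed e De); rewrite !inE; case: (D3 e); case: (D2 e); case: (D1 e).
Qed.

Section BalancedCharacterisation.
Variable good : orientation E -> Prop.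
Hypothesis good_exists : exists D, good D.
Hypothesis good_balanced : forall D, good D -> balanced D.
Hypothesis good_perm : forall D D', good D -> perm_eq (indegs D) (indegs D') -> good D'.

Lemma balanced_good D : balanced D -> good D.
Proof.
move=> balD; have [D0 good_D0] := good_exists.
have [n] := ubnP #|[set e | D0 e != D e]|.
elim: n D0 good_D0 => // n IHn D0 good_D0 lt_n.
case: (boolP [forall v, indeg D v == indeg D0 v]) => [/forallP same|/forallPn[v neq_v]].
  apply: good_perm good_D0 _; rewrite /indegs (eq_map (fun v => eqP (same v))).
  exact: perm_refl.
have [D3 [perm_D3 closer]] := exchange_step balD (good_balanced good_D0) (ex_intro _ v neq_v).
by apply: IHn (good_perm good_D0 perm_D3) _; apply: leq_trans closer _; rewrite -ltnS.
Qed.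

End BalancedCharacterisation.

Lemma dec_min_exists : exists D, dec_min ends D.
Proof.
apply: (exists_rel_min [ffun=> true]) => [D D'|D D' D''].
  exact: lex_le_total.
exact: lex_le_trans.
Qed.

Lemma inc_max_exists : exists D, inc_max ends D.
Proof.
apply: (exists_rel_min [ffun=> true]) => [D D'|D D' D'' le_DD' le_D'D''].
  exact: lex_le_total.
exact: lex_le_trans le_D'D'' le_DD'.
Qed.

Lemma dec_min_perm D D' :
  dec_min ends D -> perm_eq (indegs D) (indegs D') -> dec_min ends D'.
Proof.
move=> minD perm_DD' D''; suff -> : dec_vec ends D' = dec_vec ends D by [].
apply/esym/perm_sortP => //.
- by move=> x y; exact: leq_total.
- exact: rev_trans leq_trans.
- by move=> x y; rewrite andbC => /anti_leq.
Qed.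

Lemma inc_max_perm D D' :
  inc_max ends D -> perm_eq (indegs D) (indegs D') -> inc_max ends D'.
Proof.
move=> maxD perm_DD' D''; suff -> : inc_vec ends D' = inc_vec ends D by [].
apply/esym/perm_sortP => //.
- exact: leq_total.
- exact: leq_trans.
- exact: anti_leq.
Qed.

Lemma dec_min_balanced D : dec_min ends D -> balanced D.
Proof.
move=> minD s t path_st; rewrite leqNgt; apply/negP => steep.
have neq_st : s != t by apply: contraTneq steep => ->; rewrite ltnNge leqnSn.
have [D' [_ moved]] := reverse_connect path_st.
by have := sort_geq_move_lt neq_st moved steep; rewrite minD.
Qed.

Lemma inc_max_balanced D : inc_max ends D -> balanced D.
Proof.
move=> maxD s t path_st; rewrite leqNgt; apply/negP => steep.
have neq_st : s != t by apply: contraTneq steep => ->; rewrite ltnNge leqnSn.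
have [D' [_ moved]] := reverse_connect path_st.
by have := sort_leq_move_gt neq_st moved steep; rewrite maxD.
Qed.

Lemma dec_min_balancedE D : dec_min ends D <-> balanced D.
Proof.
split; first exact: dec_min_balanced.
exact: balanced_good dec_min_exists dec_min_balanced dec_min_perm D.
Qed.

Lemma inc_max_balancedE D : inc_max ends D <-> balanced D.
Proof.
split; first exact: inc_max_balanced.
exact: balanced_good inc_max_exists inc_max_balanced inc_max_perm D.
Qed.

End Orientations.

Theorem corollary4p3 (V E : finType) (ends : E -> V * V)
  (no_loops : forall e : E, (ends e).1 != (ends e).2)
  (D : orientation E) :
  dec_min ends D <-> inc_max ends D.
Proof.
exact: iff_trans (dec_min_balancedE ends D) (iff_sym (inc_max_balancedE ends D)).
Qed.
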